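(* Suppose $\mathcal U$ is regular enough that each functional $\phi^q_k:=\delta_{y_k}\circ L_q$ ($q=1,\dots,Q$, $k=1,\dots,K$) belongs to the dual $\mathcal U^\star$. Consider the problem $$\min_{v^1,\dots,v^M\in\mathcal U,\ G\in\mathcal P}\ \|G\|_{\mathcal P}^2+\lambda\sum_{m=1}^M\|v^m\|_{\mathcal U}^2\quad\text{s.t.}\quad v^m(Y^m)=u^m(Y^m),\ \ (G+\overline P)(\Phi(v^m,y_k))=f^m(y_k)\ \ \forall m,\ \forall k.$$ Then every minimizer $(\widehat u^1,\dots,\widehat u^M,\widehat P)$ can be written as $$\widehat u^m(y)=\mathsf U(\phi,y)^T\widehat\alpha^m,\qquad \widehat P(s)=\mathsf P(S(\widehat{\boldsymbol\alpha}),s)^T\widehat\beta,$$ where $(\widehat{\boldsymbol\alpha},\widehat\beta)$, $\widehat{\boldsymbol\alpha}=(\widehat\alpha^1,\dots,\widehat\alpha^M)\in(\mathbb R^{QK})^M$, $\widehat\beta\in\mathbb R^{MK}$, solves $$\min_{\boldsymbol\alpha\in(\mathbb R^{QK})^M,\ \beta\in\mathbb R^{MK}}\ \beta^T\mathsf P(S(\boldsymbol\alpha),S(\boldsymbol\alpha))\beta+\lambda\sum_{m=1}^M(\alpha^m)^T\mathsf U(\phi,\phi)\alpha^m$$ subject to $\mathsf U(\phi,Y^m)^T\alpha^m=u^m(Y^m)$ and $\mathsf P(S(\boldsymbol\alpha),S^m(\alpha^m))^T\beta=f^m(Y)-\overline P(S^m(\alpha^m))$ for $m=1,\dots,M$.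
   Context: Setting: $\mathcal Y\subset\mathbb R^d$; known linear differential operators $L_1=\mathrm{Id},L_2,\dots,L_Q$; $\mathcal S=\mathbb R^{Q+d}$; $\Phi(v,y)=(y,L_1v(y),\dots,L_Qv(y))\in\mathcal S$. $\mathsf U:\mathcal Y\times\mathcal Y\to\mathbb R$ and $\mathsf P:\mathcal S\times\mathcal S\to\mathbb R$ are positive definite symmetric kernels with RKHSs $\mathcal U$, $\mathcal P$; $\overline P:\mathcal S\to\mathbb R$ is known; $\lambda>0$. Training data: for $m=1,\dots,M$, observation sets $Y^m=\{y^m_1,\dots,y^m_N\}$ with values $u^m(Y^m)\in\mathbb R^N$, and functions $f^m$. Collocation points $Y=\{y_1,\dots,y_K\}\subset\mathcal Y$ with $\bigcup_mY^m\subset Y$; $f^m(Y)=(f^m(y_1),\dots,f^m(y_K))$. Notation: $\mathsf U(\phi^q_k,y):=\phi^q_k(\mathsf U(\cdot,y))$ (apply $L_q$ in the first argument and evaluate at $y_k$); $\mathsf U(\phi^q_k,\phi^\ell_j):=\phi^\ell_j(\mathsf U(\phi^q_k,\cdot))$. $\mathsf U(\phi,y)\in\mathbb R^{QK}$ is the vector $(\mathsf U(\phi^1_1,y),\dots,\mathsf U(\phi^1_K,y),\dots,\mathsf U(\phi^Q_1,y),\dots,\mathsf U(\phi^Q_K,y))$; $\mathsf U(\phi,\phi)\in\mathbb R^{QK\times QK}$ is the block matrix with $(q,\ell)$ block $(\mathsf U(\phi^q_k,\phi^\ell_j))_{k,j=1}^K$; $\mathsf U(\phi,Y^m)\in\mathbb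 R^{QK\times N}$ has columns $\mathsf U(\phi,y^m_n)$. For $\alpha^m\in\mathbb R^{QK}$, $S^m(\alpha^m)=(\Phi(\mathsf U(\phi,\cdot)^T\alpha^m,y_k))_{k=1}^K$ ($K$ points of $\mathcal S$), $S(\boldsymbol\alpha)=\bigcup_{m=1}^MS^m(\alpha^m)$ ($MK$ points); for point lists $A,A'$, $\mathsf P(A,A')$ is the matrix $(\mathsf P(a,a'))_{a\in A,a'\in A'}$ and $\mathsf P(A,s)$ the vector $(\mathsf P(a,s))_{a\in A}$; $\overline P(S^m(\alpha^m))\in\mathbb R^K$ is the vector of values of $\overline P$ on $S^m(\alpha^m)$. When kernel matrices are singular, coefficient vectors are understood in the least-squares sense. *)

From mathcomp Require Import all_boot all_order all_algebra.
From mathcomp Require Import reals.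
Set Implicit Arguments. Unset Strict Implicit. Unset Printing Implicit Defensive.
Import Order.TTheory GRing.Theory Num.Theory.
Local Open Scope ring_scope.

Section Defs.
Variable R : realType.

Definition pd_sym_kernel (T : Type) (k : T -> T -> R) : Prop :=
  (forall x y, k x y = k y x) /\
  (forall (n : nat) (x : 'I_n -> T) (c : 'I_n -> R),
      0 <= \sum_(i < n) \sum_(j < n) c i * k (x i) (x j) * c j).

Definition is_RKHS (T : Type) (k : T -> T -> R) (H : (T -> R) -> Prop)
    (ip : (T -> R) -> (T -> R) -> R) : Prop :=
    H (fun _ => 0) /\
      (forall (a : R) f g, H f -> H g -> H (fun x => a * f x + g x)) /\
      (forall f g, H f -> H g -> ip f g = ip g f) /\
      (forall (a : R) f g h, H f -> H g -> H h ->
          ip (fun x => a * f x + g x) h = a * ip f h + ip g h) /\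
      (forall f, H f -> 0 <= ip f f) /\
      (forall f, H f -> ip f f = 0 -> f = (fun _ => 0)) /\
      (forall y, H (fun x => k x y)) /\
      (forall f y, H f -> ip f (fun x => k x y) = f y) /\
      (forall u : nat -> T -> R, (forall n, H (u n)) ->
        (forall e : R, 0 < e -> exists N : nat, forall m n : nat,
            (N <= m)%N -> (N <= n)%N ->
            ip (fun x => u m x - u n x) (fun x => u m x - u n x) < e) ->
        exists g, H g /\
          (forall e : R, 0 < e -> exists N : nat, forall n : nat, (N <= n)%N ->
            ip (fun x => u n x - g x) (fun x => u n x - g x) < e)).

Definition linear_on (T : Type) (H : (T -> R) -> Prop)
    (L : (T -> R) -> (T -> R)) : Prop :=
  forall (a : R) f g, H f -> H g ->
    L (fun x => a * f x + g x) = (fun x => a * L f x + L g x).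

Definition in_dual (T : Type) (H : (T -> R) -> Prop)
    (ip : (T -> R) -> (T -> R) -> R) (phi : (T -> R) -> R) : Prop :=
  (forall (a : R) f g, H f -> H g ->
      phi (fun x => a * f x + g x) = a * phi f + phi g) /\
  (exists C : R, forall f, H f -> phi f ^+ 2 <= C * ip f f).

Variables (d Q K M : nat) (Y : Type) (emb : Y -> 'rV[R]_d).
Variable L : 'I_Q -> (Y -> R) -> (Y -> R).
Variable yc : 'I_K -> Y.

Definition phi (q : 'I_Q) (k : 'I_K) (v : Y -> R) : R := L q v (yc k).

Definition PhiS (v : Y -> R) (y : Y) : 'rV[R]_(d + Q) :=
  row_mx (emb y) (\row_(q < Q) L q v y).

Variable Uk : Y -> Y -> R.

Definition Uphi_pt (a : 'I_Q * 'I_K) (y : Y) : R :=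
  phi a.1 a.2 (fun z => Uk z y).

Definition Uphi_phi (a b : 'I_Q * 'I_K) : R :=
  phi b.1 b.2 (fun z => Uphi_pt a z).

Definition ufun (alpha : 'I_Q * 'I_K -> R) (y : Y) : R :=
  \sum_(a : 'I_Q * 'I_K) Uphi_pt a y * alpha a.

Definition Sm (alpha : 'I_Q * 'I_K -> R) (k : 'I_K) : 'rV[R]_(d + Q) :=
  PhiS (ufun alpha) (yc k).

Definition Sall (alpha : 'I_M -> 'I_Q * 'I_K -> R) (i : 'I_M * 'I_K) :
  'rV[R]_(d + Q) := Sm (alpha i.1) i.2.

Variable Pk : 'rV[R]_(d + Q) -> 'rV[R]_(d + Q) -> R.

Definition Pfun (alpha : 'I_M -> 'I_Q * 'I_K -> R) (beta : 'I_M * 'I_K -> R)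
    (s : 'rV[R]_(d + Q)) : R :=
  \sum_(i : 'I_M * 'I_K) Pk (Sall alpha i) s * beta i.

Variables (lambda : R) (N : nat) (Yobs : 'I_M -> 'I_N -> Y)
  (uobs : 'I_M -> 'I_N -> R) (f : 'I_M -> Y -> R)
  (Pbar : 'rV[R]_(d + Q) -> R).

Definition fin_objective (alpha : 'I_M -> 'I_Q * 'I_K -> R)
    (beta : 'I_M * 'I_K -> R) : R :=
  \sum_(i : 'I_M * 'I_K) \sum_(j : 'I_M * 'I_K)
      beta i * Pk (Sall alpha i) (Sall alpha j) * beta j
  + lambda * \sum_(m < M) \sum_(a : 'I_Q * 'I_K) \sum_(b : 'I_Q * 'I_K)
      alpha m a * Uphi_phi a b * alpha m b.

Definition fin_feasible (alpha : 'I_M -> 'I_Q * 'I_K -> R)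
    (beta : 'I_M * 'I_K -> R) : Prop :=
  (forall (m : 'I_M) (n : 'I_N),
      \sum_(a : 'I_Q * 'I_K) Uphi_pt a (Yobs m n) * alpha m a = uobs m n) /\
  (forall (m : 'I_M) (k : 'I_K),
      \sum_(i : 'I_M * 'I_K) Pk (Sall alpha i) (Sm (alpha m) k) * beta i
      = f m (yc k) - Pbar (Sm (alpha m) k)).

Definition fin_minimizer alpha beta : Prop :=
  fin_feasible alpha beta /\
  (forall alpha' beta', fin_feasible alpha' beta' ->
      fin_objective alpha beta <= fin_objective alpha' beta').

Variables (HU : (Y -> R) -> Prop) (ipU : (Y -> R) -> (Y -> R) -> R)
  (HP : ('rV[R]_(d + Q) -> R) -> Prop)
  (ipP : ('rV[R]_(d + Q) -> R) -> ('rV[R]_(d + Q) -> R) -> R).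

Definition inf_objective (v : 'I_M -> Y -> R) (G : 'rV[R]_(d + Q) -> R) : R :=
  ipP G G + lambda * \sum_(m < M) ipU (v m) (v m).

Definition inf_feasible (v : 'I_M -> Y -> R) (G : 'rV[R]_(d + Q) -> R) : Prop :=
  [/\ (forall m, HU (v m)), HP G,
      (forall (m : 'I_M) (n : 'I_N), v m (Yobs m n) = uobs m n) &
      (forall (m : 'I_M) (k : 'I_K),
          G (PhiS (v m) (yc k)) + Pbar (PhiS (v m) (yc k)) = f m (yc k))].

Definition inf_minimizer v G : Prop :=
  inf_feasible v G /\
  (forall v' G', inf_feasible v' G' ->
      inf_objective v G <= inf_objective v' G').

End Defs.

Definition dom_t (R : realType) (d : nat) (Ydom : 'rV[R]_d -> Prop) : Type :=
  {y : 'rV[R]_d | Ydom y}.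

(* A minimiser (v, G) is in particular optimal among the perturbations
   v^m + t h with h in the common kernel of the functionals phi^q_k, and
   G + t h with h vanishing on the points Phi(v^m, y_k): these keep every
   constraint, so minimality makes v^m and G orthogonal to those kernels.
   A functional vanishing on a finite intersection of kernels is a linear
   combination of the defining functionals, and by the reproducing property
   this yields v^m = U(phi, .)^T alpha^m and G = P(S(alpha), .)^T beta, where
   U(phi^q_k, .) is the Riesz representer of phi^q_k (Riesz's theorem is
   proved by maximising phi f - |f|^2 / 2).  On such representations the
   constraints and the objective of the variational problem coincide with
   those of the finite-dimensional problem, which (alpha, beta) therefore
   solves. *)

From Pilot Require Import Defs.
From mathcomp Require Import all_boot all_order all_algebra.
From mathcomp Require Import boolp reals ring lra.
Import Order.TTheory GRing.Theory Num.Theory.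

Set Implicit Arguments.
Unset Strict Implicit.
Unset Printing Implicit Defensive.

Local Open Scope ring_scope.

Record inner_product_space (R : realType) (T : Type) (H : (T -> R) -> Prop)
    (ip : (T -> R) -> (T -> R) -> R) : Prop := InnerProductSpace {
  ips_mem0 : H (fun _ => 0);
  ips_memD : forall a f g, H f -> H g -> H (fun x => a * f x + g x);
  ips_sym : forall f g, H f -> H g -> ip f g = ip g f;
  ips_linearl : forall a f g h, H f -> H g -> H h ->
    ip (fun x => a * f x + g x) h = a * ip f h + ip g h;
  ips_ge0 : forall f, H f -> 0 <= ip f f }.

Definition ip_complete (R : realType) (T : Type) (H : (T -> R) -> Prop)
    (ip : (T -> R) -> (T -> R) -> R) : Prop :=
  forall u : nat -> T -> R, (forall n, H (u n)) ->
    (forall e : R, 0 < e -> exists N : nat, forall m n : nat,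
        (N <= m)%N -> (N <= n)%N ->
        ip (fun x => u m x - u n x) (fun x => u m x - u n x) < e) ->
    exists g, H g /\
      (forall e : R, 0 < e -> exists N : nat, forall n : nat, (N <= n)%N ->
        ip (fun x => u n x - g x) (fun x => u n x - g x) < e).

Definition linear_functional (R : realType) (T : Type) (H : (T -> R) -> Prop)
    (phi : (T -> R) -> R) : Prop :=
  forall a f g, H f -> H g -> phi (fun x => a * f x + g x) = a * phi f + phi g.

Section RKHS.
Variables (R : realType) (T : Type) (k : T -> T -> R) (H : (T -> R) -> Prop)
  (ip : (T -> R) -> (T -> R) -> R).
Hypothesis hk : is_RKHS k H ip.

Lemma RKHS_inner_product_space : inner_product_space H ip.
Proof. by case: hk => H0 [HD [Hsym [Hlin [Hge0 _]]]]; split. Qed.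

Lemma RKHS_complete : ip_complete H ip.
Proof. by case: hk => _ [_ [_ [_ [_ [_ [_ [_ Hcomp]]]]]]]. Qed.

Lemma RKHS_mem_section y : H (fun x => k x y).
Proof. by case: hk => _ [_ [_ [_ [_ [_ [Hk _]]]]]]. Qed.

Lemma RKHS_reproducing f y : H f -> ip f (fun x => k x y) = f y.
Proof. by case: hk => _ [_ [_ [_ [_ [_ [_ [Hrep _]]]]]]]; exact: Hrep. Qed.

Lemma RKHS_eq_sum (I : Type) (r : seq I) (phi : I -> (T -> R) -> R)
    (c : I -> R) f :
  H f -> (forall w, H w -> ip f w = \sum_(i <- r) c i * phi i w) ->
  f = (fun y => \sum_(i <- r) phi i (fun x => k x y) * c i).
Proof.
move=> Hf f_span; apply/funext => y.
rewrite -RKHS_reproducing // f_span; last exact: RKHS_mem_section.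
by apply: eq_bigr => i _; rewrite mulrC.
Qed.

End RKHS.

Lemma eq0_of_le_quadratic (R : realFieldType) (c q : R) :
  0 <= q -> (forall t, t * c <= t ^+ 2 * q) -> c = 0.
Proof.
move=> q_ge0 hq; pose t := c / (2 * (q + 1)).
have ct : c = t * (2 * (q + 1)) by rewrite /t divfK //; lra.
have := hq t; rewrite {1}ct expr2 => ht.
have t0 : t * t * (q + 2) <= 0 by nra.
have : t * t = 0 by apply/eqP; rewrite eq_le mulr_ge0_le0 ?sqr_ge0 //; nra.
by move/eqP; rewrite mulf_eq0 orbb ct => /eqP ->; rewrite mul0r.
Qed.

Section InnerProductSpace.
Variables (R : realType) (T : Type) (H : (T -> R) -> Prop)
  (ip : (T -> R) -> (T -> R) -> R).
Hypothesis ips : inner_product_space H ip.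

Definition lc (a : R) (f : T -> R) (b : R) (g : T -> R) : T -> R :=
  fun x => a * f x + b * g x.

Lemma lc1r a f g : lc a f 1 g = (fun x => a * f x + g x).
Proof. by apply/funext => x; rewrite /lc mul1r. Qed.

Lemma memZ b g : H g -> H (fun x => b * g x).
Proof.
move=> Hg; have -> : (fun x => b * g x) = (fun x => b * g x + 0).
  by apply/funext => x; rewrite addr0.
exact: (ips_memD ips _ Hg (ips_mem0 ips)).
Qed.

Lemma mem_lc a f b g : H f -> H g -> H (lc a f b g).
Proof. by move=> Hf Hg; apply: (ips_memD ips _ Hf); apply: memZ. Qed.

Lemma sumfun_nil (I : Type) (F : I -> T -> R) (c : I -> R) :
  (fun x => \sum_(i <- [::]) F i x * c i) = (fun _ => 0).
Proof. by apply/funext => x; rewrite big_nil. Qed.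

Lemma sumfun_cons (I : Type) (j : I) (r : seq I) (F : I -> T -> R) (c : I -> R) :
  (fun x => \sum_(i <- j :: r) F i x * c i) =
  lc (c j) (F j) 1 (fun x => \sum_(i <- r) F i x * c i).
Proof. by apply/funext => x; rewrite big_cons /lc mul1r mulrC. Qed.

Lemma mem_sum (I : Type) (r : seq I) (F : I -> T -> R) (c : I -> R) :
  (forall i, H (F i)) -> H (fun x => \sum_(i <- r) F i x * c i).
Proof.
move=> HF; elim: r => [|i r IHr]; first by rewrite sumfun_nil; exact: (ips_mem0 ips).
by rewrite sumfun_cons; apply: mem_lc.
Qed.

Section LinearFunctional.
Variable phi : (T -> R) -> R.
Hypothesis phi_lin : linear_functional H phi.

Lemma lfun0 : phi (fun _ => 0) = 0.
Proof.
have := phi_lin 1 (ips_mem0 ips) (ips_mem0 ips).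
have -> : (fun _ : T => 1 * 0 + 0) = (fun _ => 0 : R).
  by apply/funext => x; rewrite mulr0 addr0.
lra.
Qed.

Lemma lfunZ b g : H g -> phi (fun x => b * g x) = b * phi g.
Proof.
move=> Hg; have -> : (fun x => b * g x) = (fun x => b * g x + 0).
  by apply/funext => x; rewrite addr0.
by rewrite (phi_lin b Hg (ips_mem0 ips)) lfun0 addr0.
Qed.

Lemma lfun_lc a f b g : H f -> H g -> phi (lc a f b g) = a * phi f + b * phi g.
Proof. by move=> Hf Hg; rewrite /lc phi_lin ?lfunZ //; apply: memZ. Qed.

Lemma lfun_sum (I : Type) (r : seq I) (F : I -> T -> R) (c : I -> R) :
  (forall i, H (F i)) ->
  phi (fun x => \sum_(i <- r) F i x * c i) = \sum_(i <- r) c i * phi (F i).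
Proof.
move=> HF; elim: r => [|i r IHr]; first by rewrite sumfun_nil lfun0 big_nil.
by rewrite sumfun_cons lfun_lc ?IHr ?big_cons ?mul1r //; apply: mem_sum.
Qed.

End LinearFunctional.

Lemma ip_linearl h : H h -> linear_functional H (ip^~ h).
Proof. by move=> Hh a f g Hf Hg; exact: (ips_linearl ips). Qed.

Lemma ip_linearr h : H h -> linear_functional H (ip h).
Proof.
move=> Hh a f g Hf Hg /=.
rewrite (ips_sym ips Hh (ips_memD ips a Hf Hg)) (ips_linearl ips) //.
by rewrite (ips_sym ips Hf Hh) (ips_sym ips Hg Hh).
Qed.

Lemma ip_suml (I : Type) (r : seq I) (F : I -> T -> R) (c : I -> R) h :
  (forall i, H (F i)) -> H h ->
  ip (fun x => \sum_(i <- r) F i x * c i) h = \sum_(i <- r) c i * ip (F i) h.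
Proof. by move=> HF Hh; apply: (lfun_sum (ip_linearl Hh)). Qed.

Lemma ip_sumr (I : Type) (r : seq I) (F : I -> T -> R) (c : I -> R) h :
  (forall i, H (F i)) -> H h ->
  ip h (fun x => \sum_(i <- r) F i x * c i) = \sum_(i <- r) c i * ip h (F i).
Proof. by move=> HF Hh; apply: (lfun_sum (ip_linearr Hh)). Qed.

Lemma ip_lc_lc a f b g c e : H f -> H g ->
  ip (lc a f b g) (lc c f e g) =
  a * c * ip f f + (a * e + b * c) * ip f g + b * e * ip g g.
Proof.
move=> Hf Hg; rewrite (lfun_lc (ip_linearl (mem_lc c e Hf Hg))) //.
rewrite !(lfun_lc (ip_linearr _)) // (ips_sym ips Hg Hf); ring.
Qed.

Lemma lc_sub f g : lc 1 f (-1) g = (fun x => f x - g x).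
Proof. by apply/funext => x; rewrite /lc mul1r mulN1r. Qed.

Lemma ip_eq0_of_min v h : H v -> H h ->
  (forall t, ip v v <= ip (fun x => t * h x + v x) (fun x => t * h x + v x)) ->
  ip v h = 0.
Proof.
move=> Hv Hh vmin; suff : - 2 * ip h v = 0 by rewrite (ips_sym ips Hv Hh); lra.
apply: (eq0_of_le_quadratic (ips_ge0 ips Hh)) => t.
by have := vmin t; rewrite -lc1r ip_lc_lc // expr2; lra.
Qed.

(* Cauchy-Schwarz, weakened by [+ 1] to avoid a case split on [ip x x = 0]. *)
Lemma ip_sqr_le x y : H x -> H y -> ip x y ^+ 2 <= (ip x x + 1) * ip y y.
Proof.
move=> Hx Hy; set A := ip x x; set D := ip y y; set P := ip x y.
have A_ge0 : 0 <= A := ips_ge0 ips Hx.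
have D_ge0 : 0 <= D := ips_ge0 ips Hy.
pose t := - P / (A + 1).
have tA : t * (A + 1) = - P by rewrite /t divfK //; lra.
have := ips_ge0 ips (mem_lc t 1 Hx Hy).
rewrite ip_lc_lc // -/A -/D -/P !mulr1 !mul1r => ht.
have := mulr_ge0 (sqr_ge0 (A + 1)) ht.
rewrite !expr2 => h; nra.
Qed.

End InnerProductSpace.

Lemma invS_lt_eventually (R : archiFieldType) (e : R) :
  0 < e -> exists N, forall n, (N <= n)%N -> n.+1%:R^-1 < e.
Proof.
move=> e_gt0; exists (Num.Def.archi_bound e^-1) => n le_Nn.
have Ne : e^-1 < (Num.Def.archi_bound e^-1)%:R.
  by apply: archi_boundP; rewrite invr_ge0 ltW.
have Nn : (Num.Def.archi_bound e^-1)%:R <= n%:R :> R by rewrite ler_nat.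
have nS : n%:R < n.+1%:R :> R by rewrite ltr_nat.
rewrite -[e in _ < e]invrK ltf_pV2 ?posrE ?invr_gt0 ?ltr0Sn //; lra.
Qed.

Lemma lt_of_sqr_le (R : realFieldType) (C x y e : R) :
  0 < C -> 0 < e -> x ^+ 2 <= C * y -> y < e ^+ 2 / C -> x < e.
Proof.
move=> C_gt0 e_gt0 xy; rewrite ltr_pdivlMr // => ye.
have : x * x < e * e by rewrite -!expr2; lra.
nra.
Qed.

Section Riesz.
Variables (R : realType) (T : Type) (H : (T -> R) -> Prop)
  (ip : (T -> R) -> (T -> R) -> R).
Hypotheses (ips : inner_product_space H ip) (ip_compl : ip_complete H ip).
Variables (phi : (T -> R) -> R) (C : R).
Hypotheses (phi_lin : linear_functional H phi) (C_gt0 : 0 < C)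
  (phi_bounded : forall f, H f -> phi f ^+ 2 <= C * ip f f).

(* The Riesz representer of [phi] is the maximiser of this concave functional;
   maximising sequences are Cauchy by the parallelogram identity [energy_mid]. *)
Definition energy f := phi f - ip f f / 2.

Lemma energy_le f : H f -> energy f <= C / 2.
Proof.
move=> Hf; have := phi_bounded Hf; have := ips_ge0 ips Hf.
have := sqr_ge0 (phi f - C); have := C_gt0; rewrite /energy !expr2; nra.
Qed.

Lemma energy_mid f g : H f -> H g ->
  energy (lc (1 / 2) f (1 / 2) g) =
  (energy f + energy g) / 2 + ip (lc 1 f (-1) g) (lc 1 f (-1) g) / 8.
Proof.
by move=> Hf Hg; rewrite /energy (lfun_lc ips) // !(ip_lc_lc ips) //; field.
Qed.

Lemma energy_shift f g : H f -> H g ->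
  let d := lc 1 f (-1) g in
  energy f = energy g + (phi d - ip g d) - ip d d / 2.
Proof.
move=> Hf Hg d; rewrite /energy /d (lfun_lc ips) //.
rewrite (lfun_lc ips (ip_linearr ips Hg)) //.
by rewrite (ip_lc_lc ips) // (ips_sym ips Hg Hf); field.
Qed.

Lemma energy_sup_seq : exists (s : R) (u : nat -> T -> R),
  [/\ forall f, H f -> energy f <= s, forall n, H (u n) &
      forall e : R, 0 < e ->
        exists N, forall n, (N <= n)%N -> s - e < energy (u n)].
Proof.
pose E x := exists f, H f /\ x = energy f.
have E_sup : classical_sets.has_sup E.
  split; last by exists (C / 2) => x [f [Hf ->]]; apply: energy_le.
  by exists (energy (fun _ => 0)), (fun _ => 0); split; first exact: (ips_mem0 ips).
have near_sup n : exists f, H f /\ sup E - n.+1%:R^-1 < energy f.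
  have inv_gt0 : 0 < n.+1%:R^-1 :> R by rewrite invr_gt0 ltr0Sn.
  by have [x [f [Hf ->]] lt_x] := sup_adherent inv_gt0 E_sup; exists f.
have [u u_near] := choice near_sup.
exists (sup E), u; split=> [f Hf | n | e e_gt0].
- by apply: sup_upper_bound => //; exists f.
- by case: (u_near n).
- have [N hN] := invS_lt_eventually e_gt0; exists N => n le_Nn.
  by apply: lt_trans (u_near n).2; rewrite ltrD2l ltrN2; apply: hN.
Qed.

Section MaximizingSequence.
Variables (s : R) (u : nat -> T -> R).
Hypotheses (s_ub : forall f, H f -> energy f <= s) (Hu : forall n, H (u n))
  (u_to_s : forall e : R, 0 < e ->
     exists N, forall n, (N <= n)%N -> s - e < energy (u n)).

Lemma maximizing_seq_cauchy (e : R) : 0 < e -> exists N, forall m n,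
  (N <= m)%N -> (N <= n)%N ->
  ip (fun x => u m x - u n x) (fun x => u m x - u n x) < e.
Proof.
move=> e_gt0; have e8_gt0 : 0 < e / 8 by lra.
have [N hN] := u_to_s e8_gt0; exists N => m n le_Nm le_Nn; rewrite -lc_sub.
have := s_ub (mem_lc ips (1 / 2) (1 / 2) (Hu m) (Hu n)); rewrite energy_mid //.
by have := hN m le_Nm; have := hN n le_Nn; lra.
Qed.

Lemma maximizing_seq_limit g : H g ->
  (forall e : R, 0 < e -> exists N, forall n, (N <= n)%N ->
     ip (fun x => u n x - g x) (fun x => u n x - g x) < e) ->
  s <= energy g.
Proof.
move=> Hg u_to_g; apply/ler_addgt0Pr => e e_gt0.
pose C' := 2 * (C + ip g g + 1).
have C'_gt0 : 0 < C' by have := ips_ge0 ips Hg; have := C_gt0; rewrite /C'; lra.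
have e2_gt0 : 0 < e / 2 by lra.
have [N1 hN1] := u_to_g _ (divr_gt0 (exprn_gt0 2 e2_gt0) C'_gt0).
have [N2 hN2] := u_to_s e2_gt0.
pose n := maxn N1 N2.
have d_small := hN1 n (leq_maxl N1 N2); rewrite -lc_sub in d_small.
have Hd := mem_lc ips 1 (-1) (Hu n) Hg.
set d := lc 1 (u n) (-1) g in d_small Hd.
have psi_bounded : (phi d - ip g d) ^+ 2 <= C' * ip d d.
  have := phi_bounded Hd; have := ip_sqr_le ips Hg Hd; have := ips_ge0 ips Hd.
  have := sqr_ge0 (phi d + ip g d); rewrite /C' !expr2; nra.
have := lt_of_sqr_le C'_gt0 e2_gt0 psi_bounded d_small.
have := energy_shift (Hu n) Hg; have := ips_ge0 ips Hd.
have := hN2 n (leq_maxr N1 N2).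
rewrite /= -/d; lra.
Qed.

End MaximizingSequence.

Lemma energy_has_maximizer :
  exists g, H g /\ forall f, H f -> energy f <= energy g.
Proof.
have [s [u [s_ub Hu u_to_s]]] := energy_sup_seq.
have [g [Hg u_to_g]] := ip_compl Hu (maximizing_seq_cauchy s_ub Hu u_to_s).
exists g; split => // f Hf; apply: le_trans (s_ub f Hf) _.
exact: (maximizing_seq_limit Hu u_to_s Hg u_to_g).
Qed.

Lemma maximizer_represents g : H g -> (forall f, H f -> energy f <= energy g) ->
  forall h, H h -> ip g h = phi h.
Proof.
move=> Hg g_max h Hh; suff : phi h - ip g h = 0 by lra.
have hh_ge0 : 0 <= ip h h / 2 by have := ips_ge0 ips Hh; lra.
apply: (eq0_of_le_quadratic hh_ge0) => t.
have := g_max _ (mem_lc ips t 1 Hh Hg).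
rewrite /energy (lfun_lc ips) // (ip_lc_lc ips) // (ips_sym ips Hh Hg) expr2; lra.
Qed.

End Riesz.

Lemma riesz_representation (R : realType) (T : Type) (H : (T -> R) -> Prop)
    (ip : (T -> R) -> (T -> R) -> R) (phi : (T -> R) -> R) :
  inner_product_space H ip -> ip_complete H ip -> linear_functional H phi ->
  (exists C, forall f, H f -> phi f ^+ 2 <= C * ip f f) ->
  exists r, H r /\ forall h, H h -> ip r h = phi h.
Proof.
move=> ips ip_compl phi_lin [C phi_bounded].
have C1_gt0 : 0 < `|C| + 1 by have := normr_ge0 C; lra.
have phi_bounded1 f : H f -> phi f ^+ 2 <= (`|C| + 1) * ip f f.
  move=> Hf; apply: le_trans (phi_bounded f Hf) _.
  by apply: ler_wpM2r; [exact: (ips_ge0 ips Hf) | have := ler_norm C; lra].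
have [g [Hg g_max]] := energy_has_maximizer ips ip_compl phi_lin C1_gt0 phi_bounded1.
by exists g; split => // h; exact: (maximizer_represents ips phi_lin Hg g_max).
Qed.

Lemma lfun_factor (R : realType) (T : Type) (V : (T -> R) -> Prop)
    (psi l : (T -> R) -> R) :
  (forall a f g, V f -> V g -> V (fun x => a * f x + g x)) ->
  linear_functional V psi -> linear_functional V l ->
  (forall w, V w -> psi w = 0 -> l w = 0) ->
  exists k, forall w, V w -> l w = k * psi w.
Proof.
move=> V_lin psi_lin l_lin l_ker.
have [[x0 [Vx0 psi_x0]] | psi_V0] := pselect (exists x0, V x0 /\ psi x0 != 0).
  exists (l x0 / psi x0) => w Vw.
  have Vz := V_lin (- (psi w / psi x0)) _ _ Vx0 Vw.
  have := l_ker _ Vz; rewrite psi_lin // l_lin // mulNr divfK // addNr => /(_ erefl).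
  by move=> lz; rewrite -[l w]subr0 -lz; field.
exists 0 => w Vw; rewrite mul0r; apply: l_ker => //.
by apply/eqP; apply: contra_notT psi_V0 => psi_w; exists w.
Qed.

Lemma lfun_in_span (R : realType) (T : Type) (V : (T -> R) -> Prop)
    (I : eqType) (phi : I -> (T -> R) -> R) (s : seq I) :
  (forall a f g, V f -> V g -> V (fun x => a * f x + g x)) -> uniq s ->
  (forall i, linear_functional V (phi i)) ->
  forall l, linear_functional V l ->
  (forall w, V w -> (forall i, i \in s -> phi i w = 0) -> l w = 0) ->
  exists c : I -> R, forall w, V w -> l w = \sum_(i <- s) c i * phi i w.
Proof.
move=> V_lin; elim: s => [|i0 s IHs] /= s_uniq phi_lin l l_lin l_ker.
  by exists (fun _ => 0) => w Vw; rewrite big_nil; apply: l_ker.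
case/andP: s_uniq => i0_notin s_uniq.
pose W w := V w /\ forall i, i \in s -> phi i w = 0.
have W_lin a f g : W f -> W g -> W (fun x => a * f x + g x).
  move=> [Vf f0] [Vg g0]; split; first exact: V_lin.
  by move=> i i_s; rewrite phi_lin // f0 // g0 // mulr0 addr0.
have [k hk] : exists k, forall w, W w -> l w = k * phi i0 w.
  apply: lfun_factor W_lin _ _ _.
  - by move=> a f g [Vf _] [Vg _]; apply: phi_lin.
  - by move=> a f g [Vf _] [Vg _]; apply: l_lin.
  move=> w [Vw w0] w_i0; apply: l_ker => // i.
  by rewrite inE => /orP [/eqP -> | /w0].
pose l' w := l w - k * phi i0 w.
have l'_lin : linear_functional V l'.
  by move=> a f g Vf Vg; rewrite /l' l_lin // phi_lin //; ring.
have [c hc] : exists c : I -> R, forall w, V w -> l' w = \sum_(i <- s) c i * phi i w.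
  by apply: IHs => // w Vw w0; rewrite /l' (hk w (conj Vw w0)) subrr.
exists (fun i => if i == i0 then k else c i) => w Vw.
rewrite big_cons eqxx (eq_big_seq (fun i => c i * phi i w)) => [|i i_s]; last first.
  by case: eqP i_s => // ->; rewrite (negbTE i0_notin).
by rewrite -hc // /l'; ring.
Qed.

Section KernelRepresentation.
Variables (R : realType) (d Q K M N : nat) (Y : Type) (emb : Y -> 'rV[R]_d).
Variables (L : 'I_Q -> (Y -> R) -> (Y -> R)) (yc : 'I_K -> Y) (Uk : Y -> Y -> R)
  (Pk : 'rV[R]_(d + Q) -> 'rV[R]_(d + Q) -> R).
Variables (HU : (Y -> R) -> Prop) (ipU : (Y -> R) -> (Y -> R) -> R)
  (HP : ('rV[R]_(d + Q) -> R) -> Prop)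
  (ipP : ('rV[R]_(d + Q) -> R) -> ('rV[R]_(d + Q) -> R) -> R).
Variables (Pbar : 'rV[R]_(d + Q) -> R) (lambda : R) (Yobs : 'I_M -> 'I_N -> Y)
  (uobs : 'I_M -> 'I_N -> R) (f : 'I_M -> Y -> R).

Hypotheses (hU : is_RKHS Uk HU ipU) (hP : is_RKHS Pk HP ipP)
  (Pk_sym : forall s t, Pk s t = Pk t s)
  (hdual : forall q k, in_dual HU ipU (phi L yc q k)).

Local Notation ufun := (ufun L yc Uk).
Local Notation Uphi_pt := (Uphi_pt L yc Uk).
Local Notation Pfun := (Pfun emb L yc Uk Pk).
Local Notation Sall := (Sall emb L yc Uk).
Local Notation PhiS := (PhiS emb L).
Local Notation inf_feasible := (inf_feasible emb L yc Yobs uobs f Pbar HU HP).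
Local Notation inf_objective := (inf_objective lambda ipU ipP).

Implicit Types (al : 'I_M -> 'I_Q * 'I_K -> R) (be : 'I_M * 'I_K -> R).

Let ipsU := RKHS_inner_product_space hU.
Let ipsP := RKHS_inner_product_space hP.

(* Evaluating the Riesz representer of [phi^q_k] through the reproducing
   property gives back the definition of [U(phi^q_k, .)]. *)
Lemma Uphi_pt_riesz a :
  HU (Uphi_pt a) /\ forall h, HU h -> ipU (Uphi_pt a) h = phi L yc a.1 a.2 h.
Proof.
have [r [Hr r_rep]] := riesz_representation ipsU (RKHS_complete hU)
  (hdual a.1 a.2).1 (hdual a.1 a.2).2.
suff -> : Uphi_pt a = r by [].
apply/funext => y; rewrite /Defs.Uphi_pt -r_rep ?(RKHS_reproducing hU) //.
exact: RKHS_mem_section hU y.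
Qed.

Lemma mem_Uphi_pt a : HU (Uphi_pt a).
Proof. by case: (Uphi_pt_riesz a). Qed.

Lemma ipU_Uphi_pt a h : HU h -> ipU (Uphi_pt a) h = phi L yc a.1 a.2 h.
Proof. by case: (Uphi_pt_riesz a) => _; apply. Qed.

Lemma mem_ufun c : HU (ufun c).
Proof. by rewrite /Defs.ufun; apply: (mem_sum ipsU); apply: mem_Uphi_pt. Qed.

Lemma ipU_ufun c : ipU (ufun c) (ufun c) =
  \sum_a \sum_b c a * Uphi_phi L yc Uk a b * c b.
Proof.
rewrite exchange_big {1}/Defs.ufun (ip_suml ipsU _ _ mem_Uphi_pt (mem_ufun c)).
apply: eq_bigr => a _; rewrite (ip_sumr ipsU _ _ mem_Uphi_pt (mem_Uphi_pt a)).
rewrite big_distrr /=; apply: eq_bigr => b _.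
rewrite ipU_Uphi_pt; last exact: mem_Uphi_pt.
by rewrite /Defs.Uphi_phi; ring.
Qed.

Lemma PfunE al be :
  Pfun al be = (fun s => \sum_i Pk s (Sall al i) * be i).
Proof. by apply/funext => s; apply: eq_bigr => i _; rewrite Pk_sym. Qed.

Lemma mem_Pfun al be : HP (Pfun al be).
Proof.
by rewrite PfunE; apply: (mem_sum ipsP) => i; apply: (RKHS_mem_section hP).
Qed.

Lemma ipP_Pfun al be :
  ipP (Pfun al be) (Pfun al be) =
  \sum_i \sum_j be i * Pk (Sall al i) (Sall al j) * be j.
Proof.
have Hsec i : HP (fun s => Pk s (Sall al i)) by apply: (RKHS_mem_section hP).
rewrite {1}PfunE (ip_suml ipsP _ _ Hsec (mem_Pfun al be)).
apply: eq_bigr => i _; rewrite (ips_sym ipsP (Hsec i) (mem_Pfun al be)).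
rewrite (RKHS_reproducing hP _ (mem_Pfun al be)).
rewrite /Defs.Pfun big_distrr /=; apply: eq_bigr => j _.
by rewrite (Pk_sym (Sall al j)); ring.
Qed.

Lemma inf_objective_repr al be :
  inf_objective (fun m => ufun (al m)) (Pfun al be) =
  fin_objective emb L yc Uk Pk lambda al be.
Proof.
rewrite /Defs.inf_objective /fin_objective ipP_Pfun.
by congr (_ + lambda * _); apply: eq_bigr => m _; apply: ipU_ufun.
Qed.

Lemma inf_feasible_repr al be :
  inf_feasible (fun m => ufun (al m)) (Pfun al be) <->
  fin_feasible emb L yc Uk Pk Yobs uobs f Pbar al be.
Proof.
split=> [[_ _ obs constr] | [obs constr]].
  by split=> // m k; rewrite -(constr m k) addrK.
split=> // [m | | m k]; [exact: mem_ufun | exact: mem_Pfun |].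
by rewrite /Defs.Pfun constr subrK.
Qed.

Section Minimizer.
Hypotheses (hQ : (0 < Q)%N) (hL1 : forall v, L (Ordinal hQ) v = v)
  (hLlin : forall q, linear_on HU (L q)) (hlam : 0 < lambda)
  (hobs : forall m n, exists k, Yobs m n = yc k).

Lemma PhiS_perturb w h t k : HU w -> HU h -> (forall q, phi L yc q k h = 0) ->
  PhiS (fun x => t * h x + w x) (yc k) = PhiS w (yc k).
Proof.
move=> Hw Hh h0; rewrite /Defs.PhiS; congr row_mx; apply/rowP => q.
rewrite !mxE (hLlin q t Hh Hw) /=.
by have := h0 q; rewrite /phi => ->; rewrite mulr0 add0r.
Qed.

(* The observation points are collocation points, where [h] vanishes since
   [L_1] is the identity. *)
Lemma inf_feasible_perturb_u v G m h t : inf_feasible v G -> HU h ->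
  (forall q k, phi L yc q k h = 0) ->
  inf_feasible (fun j => if j == m then (fun x => t * h x + v m x) else v j) G.
Proof.
case=> Hv HG obs constr Hh h0; split=> // [j | j n | j k] /=.
- by case: eqP => [<- | _]; [exact: (ips_memD ipsU t Hh (Hv j)) | exact: Hv].
- case: eqP => [<- | _ //]; have [k Ek] := hobs j n; have := h0 (Ordinal hQ) k.
  by rewrite /phi hL1 Ek => ->; rewrite mulr0 add0r -Ek obs.
- by case: eqP => [<- | _ //]; rewrite PhiS_perturb.
Qed.

Lemma inf_feasible_perturb_P v G h t : inf_feasible v G -> HP h ->
  (forall m k, h (PhiS (v m) (yc k)) = 0) ->
  inf_feasible v (fun s => t * h s + G s).
Proof.
case=> Hv HG obs constr Hh h0; split=> // [|m k]; first exact: (ips_memD ipsP).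
by rewrite h0 mulr0 add0r.
Qed.

Variables (v : 'I_M -> Y -> R) (G : 'rV[R]_(d + Q) -> R).
Hypothesis vG_min :
  inf_minimizer emb L yc lambda Yobs uobs f Pbar HU ipU HP ipP v G.

Lemma minimizer_ipU_orth m h : HU h -> (forall q k, phi L yc q k h = 0) ->
  ipU (v m) h = 0.
Proof.
case: vG_min => feas vG_le Hh h0; have [Hv _ _ _] := feas.
apply: (ip_eq0_of_min ipsU (Hv m) Hh) => t.
have := vG_le _ _ (inf_feasible_perturb_u m t feas Hh h0).
rewrite /Defs.inf_objective (bigD1 m) // [X in _ <= _ + lambda * X](bigD1 m) //= eqxx.
rewrite [X in _ <= _ + lambda * (_ + X)](eq_bigr (fun j => ipU (v j) (v j))).
  by rewrite lerD2l ler_pM2l // lerD2r.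
by move=> j /negbTE ->.
Qed.

Lemma minimizer_ipP_orth h : HP h -> (forall m k, h (PhiS (v m) (yc k)) = 0) ->
  ipP G h = 0.
Proof.
case: vG_min => feas vG_le Hh h0; have [_ HG _ _] := feas.
apply: (ip_eq0_of_min ipsP HG Hh) => t.
have := vG_le _ _ (inf_feasible_perturb_P t feas Hh h0).
by rewrite /Defs.inf_objective lerD2r.
Qed.

Lemma minimizer_ufun : exists alpha, forall m, v m = ufun (alpha m).
Proof.
case: vG_min => [[Hv _ _ _] _].
have span m : exists c : 'I_Q * 'I_K -> R, forall w, HU w ->
    ipU (v m) w = \sum_a c a * phi L yc a.1 a.2 w.
  apply: (lfun_in_span (ips_memD ipsU) (index_enum_uniq _)).
  - by move=> a; exact: (hdual a.1 a.2).1.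
  - exact: (ip_linearr ipsU (Hv m)).
  move=> w Hw w0; apply: minimizer_ipU_orth => // q k.
  by apply: (w0 (q, k)); rewrite mem_index_enum.
have [alpha halpha] := choice span.
by exists alpha => m; apply: (RKHS_eq_sum hU (Hv m) (halpha m)).
Qed.

Lemma minimizer_Pfun alpha : (forall m, v m = ufun (alpha m)) ->
  exists beta, G = Pfun alpha beta.
Proof.
case: vG_min => [[_ HG _ _] _] valpha.
have [beta hbeta] : exists beta : 'I_M * 'I_K -> R, forall w, HP w ->
    ipP G w = \sum_i beta i * w (Sall alpha i).
  apply: (lfun_in_span (ips_memD ipsP) (index_enum_uniq _)) => //.
  - exact: (ip_linearr ipsP HG).
  move=> w Hw w0; apply: minimizer_ipP_orth => // m k; rewrite valpha.
  by apply: (w0 (m, k)); rewrite mem_index_enum.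
by exists beta; apply: (RKHS_eq_sum hP HG hbeta).
Qed.

End Minimizer.

End KernelRepresentation.

Theorem theorem2 (R : realType) (d Q K M N : nat)
    (Ydom : 'rV[R]_d -> Prop)
    (L : 'I_Q -> (dom_t Ydom -> R) -> (dom_t Ydom -> R))
    (Uk : dom_t Ydom -> dom_t Ydom -> R)
    (Pk : 'rV[R]_(d + Q) -> 'rV[R]_(d + Q) -> R)
    (HU : (dom_t Ydom -> R) -> Prop)
    (ipU : (dom_t Ydom -> R) -> (dom_t Ydom -> R) -> R)
    (HP : ('rV[R]_(d + Q) -> R) -> Prop)
    (ipP : ('rV[R]_(d + Q) -> R) -> ('rV[R]_(d + Q) -> R) -> R)
    (Pbar : 'rV[R]_(d + Q) -> R) (lambda : R)
    (yc : 'I_K -> dom_t Ydom)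
    (Yobs : 'I_M -> 'I_N -> dom_t Ydom) (uobs : 'I_M -> 'I_N -> R)
    (f : 'I_M -> dom_t Ydom -> R)
    (hQ : (0 < Q)%N)
    (hL1 : forall v, L (Ordinal hQ) v = v)
    (hUk : pd_sym_kernel Uk) (hPk : pd_sym_kernel Pk)
    (hU : is_RKHS Uk HU ipU) (hP : is_RKHS Pk HP ipP)
    (hLlin : forall q, linear_on HU (L q))
    (hdual : forall q k, in_dual HU ipU (phi L yc q k))
    (hlam : 0 < lambda)
    (hobs : forall m n, exists k, Yobs m n = yc k) :
  forall (v : 'I_M -> dom_t Ydom -> R) (G : 'rV[R]_(d + Q) -> R),
    inf_minimizer (fun y => sval y) L yc lambda Yobs uobs f Pbar HU ipU HP ipP v G ->
    exists (alpha : 'I_M -> 'I_Q * 'I_K -> R) (beta : 'I_M * 'I_K -> R),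
      [/\ (forall m, v m = ufun L yc Uk (alpha m)),
          G = Pfun (fun y => sval y) L yc Uk Pk alpha beta &
          fin_minimizer (fun y => sval y) L yc Uk Pk lambda Yobs uobs f Pbar
            alpha beta].
Proof.
move=> v G vG_min; have [Pk_sym _] := hPk.
have [alpha v_eq] := minimizer_ufun hU hdual hL1 hLlin hlam hobs vG_min.
have [beta G_eq] := minimizer_Pfun hP vG_min v_eq.
have v_fun : v = (fun m => ufun L yc Uk (alpha m)) by apply/funext.
have feasible_iff :=
  inf_feasible_repr (fun y => sval y) Pbar Yobs uobs f hU hP Pk_sym hdual.
have objective_eq :=
  inf_objective_repr (fun y => sval y) lambda hU hP Pk_sym hdual.
exists alpha, beta; split=> //.
case: vG_min; rewrite v_fun G_eq => /feasible_iff feas vG_le; split=> // al be.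
by move/feasible_iff => feas'; rewrite -!objective_eq; apply: vG_le.
Qed.
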